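(* For every prime power $q$, all integers $n$, $r \le \lfloor n/2 \rfloor$ and $0 \le t \le r$, $$q^{t(n-t)} \le V_{\mathrm{C}}(t) < K_q^{-2}\, q^{t(n-t)}.$$
   Context: For integers $0\le k\le m$, ${m \brack k} = \prod_{i=0}^{k-1}\frac{q^m - q^i}{q^k - q^i}$ is the Gaussian binomial coefficient. $K_q = \prod_{j=1}^\infty (1 - q^{-j})$. For $0 \le d \le r$, $N_{\mathrm{C}}(d) = q^{d^2}{r \brack d}{n-r \brack d}$ (the number of $r$-dimensional subspaces of $\mathrm{GF}(q)^n$ at injection distance $d$ from a given one, where $d_{\mathrm{I}}(U,V) = \dim(U+V) - \min\{\dim U,\dim V\}$), and $V_{\mathrm{C}}(t) = \sum_{d=0}^t N_{\mathrm{C}}(d)$. *)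

From HB Require Import structures.
From mathcomp Require Import all_boot all_order all_algebra.
From mathcomp Require Import all_classical all_reals all_analysis.
Set Implicit Arguments. Unset Strict Implicit. Unset Printing Implicit Defensive.
Import Order.TTheory GRing.Theory Num.Theory.
Local Open Scope ring_scope.

Definition prime_power (q : nat) : Prop :=
  exists p k : nat, prime p /\ (0 < k)%N /\ q = (p ^ k)%N.

Definition gauss_binom (R : realType) (q m k : nat) : R :=
  \prod_(i < k) (((q%:R : R) ^+ m - (q%:R) ^+ i) / ((q%:R) ^+ k - (q%:R) ^+ i)).

Definition Kq (R : realType) (q : nat) : R :=
  limn (fun m : nat => \prod_(1 <= j < m.+1) (1 - ((q%:R : R) ^+ j)^-1)).

Definition N_C (R : realType) (q n r d : nat) : R :=
  (q%:R : R) ^+ (d * d) * gauss_binom R q r d * gauss_binom R q (n - r) d.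

Definition V_C (R : realType) (q n r t : nat) : R :=
  \sum_(0 <= d < t.+1) N_C R q n r d.

From HB Require Import structures.
From mathcomp Require Import all_boot all_order all_algebra.
From mathcomp Require Import all_classical all_reals all_analysis.
From mathcomp Require Import ring lra zify.
Set Implicit Arguments. Unset Strict Implicit. Unset Printing Implicit Defensive.
Import Order.TTheory GRing.Theory Num.Theory numFieldNormedType.Exports.
Local Open Scope ring_scope.

(* Write s = n - r >= r.  The lower bound is the single term N_C(t), since
   [m choose k]_q >= q^(k(m-k)).  For the upper bound, the identity
   [r,d][r-d,t-d] = [r,t][t,t-d] gives [r,d] <= [r,t][t,t-d] for d <= t, and the
   q-Vandermonde identity sums the resulting terms:
   V_C(t) <= [r,t] * sum_d q^(d^2) [t,t-d][s,d] = [r,t] [t+s,t].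
   Finally [m,k]_q <= q^(k(m-k)) / P_k with P_k = prod_(1<=j<=k) (1 - q^-j), and
   P_k > K_q > 0 because the partial products decrease strictly and stay
   above 1/6. *)

Lemma bin2S_addn (a b : nat) :
  'C((a + b).+1, 2) = ('C(a.+1, 2) + 'C(b.+1, 2) + a * b)%N.
Proof.
elim: b => [|b IH]; first by rewrite addn0 muln0 [in 'C(1, 2)]bin_small ?addn0.
by rewrite addnS (binS (a + b).+1) (binS b.+1) !bin1 IH; lia.
Qed.

Section QBinomial.

Variable R : realType.
Variable q : nat.
Hypothesis q_gt1 : (1 < q)%N.

Local Notation Q := (q%:R : R).

(* [qfact m] is (q-1)^m times the q-factorial [m]_q!; the powers of (q-1)
   cancel in every ratio below. *)
Definition qfact (m : nat) : R := \prod_(i < m) (Q ^+ i.+1 - 1).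

Definition qpoch (m : nat) : R := \prod_(i < m) (1 - (Q ^+ i.+1)^-1).

Lemma qnat_gt1 : 1 < Q.
Proof. by rewrite ltr1n. Qed.

Lemma qpow_gt0 (k : nat) : 0 < Q ^+ k.
Proof. by rewrite exprn_gt0 // (lt_trans ltr01 qnat_gt1). Qed.

Lemma qpowS_gt1 (k : nat) : 1 < Q ^+ k.+1.
Proof. by rewrite exprn_egt1 // qnat_gt1. Qed.

Lemma qfactS (m : nat) : qfact m.+1 = qfact m * (Q ^+ m.+1 - 1).
Proof. by rewrite /qfact big_ord_recr. Qed.

Lemma qpochS (m : nat) : qpoch m.+1 = qpoch m * (1 - (Q ^+ m.+1)^-1).
Proof. by rewrite /qpoch big_ord_recr. Qed.

Lemma qfact0 : qfact 0 = 1.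
Proof. by rewrite /qfact big_ord0. Qed.

Lemma qfact_gt0 (m : nat) : 0 < qfact m.
Proof. by apply: prodr_gt0 => i _; rewrite subr_gt0 qpowS_gt1. Qed.

Lemma qpoch_gt0 (m : nat) : 0 < qpoch m.
Proof.
by apply: prodr_gt0 => i _; rewrite subr_gt0 invf_lt1 ?qpow_gt0 ?qpowS_gt1.
Qed.

Lemma qfact_qpoch (m : nat) : qfact m = Q ^+ 'C(m.+1, 2) * qpoch m.
Proof.
elim: m => [|m IH]; first by rewrite /qfact /qpoch !big_ord0 bin_small ?mulr1.
rewrite qfactS qpochS IH (binS m.+1) bin1 addnC exprD.
by field; rewrite gt_eqF ?qpow_gt0.
Qed.

Lemma qpoch_nonincreasing : {homo qpoch : m n / (m <= n)%N >-> n <= m}.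
Proof.
move=> m n /subnKC <-; elim: (n - m)%N => [|k IH]; first by rewrite addn0.
rewrite addnS qpochS (le_trans _ IH) // ler_piMr ?ltW ?qpoch_gt0 //.
by rewrite ltrBlDr ltrDl invr_gt0 qpow_gt0.
Qed.

(* The extra term q^-(m+1)/3 is what lets the induction absorb the next
   factor (using q >= 2); it yields a uniform positive lower bound. *)
Lemma qpochS_ge (m : nat) : 1 / 6 + (Q ^+ m.+1)^-1 / 3 <= qpoch m.+1.
Proof.
have q_ge2 : (2 : R) <= Q by rewrite (ler_nat R 2 q).
have x_gt0 : 0 < Q^-1 by rewrite invr_gt0 (lt_trans ltr01 qnat_gt1).
have x_le : Q^-1 <= 1 / 2.
  by rewrite -(@invr1 R) -invfM mul1r lef_pV2 ?posrE //; lra.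
elim: m => [|m IH]; first by rewrite qpochS /qpoch big_ord0 mul1r expr1; lra.
rewrite qpochS exprS invfM.
set x := Q^-1 in x_gt0 x_le *; set y := (Q ^+ m.+1)^-1 in IH *.
have y_ge0 : 0 <= y by rewrite invr_ge0 ltW ?qpow_gt0.
have y_le : y <= x.
  rewrite lef_pV2 ?posrE ?qpow_gt0 ?(lt_trans ltr01 qnat_gt1) //.
  by rewrite -{1}(expr1 Q) ler_eXn2l ?qnat_gt1.
have := ler_wpM2r (_ : 0 <= 1 - x * y) IH; nra.
Qed.

Lemma qpoch_ge (m : nat) : 1 / 6 <= qpoch m.
Proof.
case: m => [|m]; first by rewrite /qpoch big_ord0; lra.
apply: le_trans (qpochS_ge m).
by rewrite lerDl divr_ge0 // invr_ge0 ltW ?qpow_gt0.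
Qed.

Lemma Kq_limn_qpoch : Kq R q = limn qpoch.
Proof. by congr (limn _); apply: funext => m; rewrite big_add1 /= big_mkord. Qed.

Lemma qpoch_cvgn : cvgn qpoch.
Proof.
apply: nonincreasing_is_cvgn qpoch_nonincreasing _.
by exists (1 / 6) => _ [m _ <-]; exact: qpoch_ge.
Qed.

Lemma Kq_gt0 : 0 < Kq R q.
Proof.
rewrite Kq_limn_qpoch; apply: (@lt_le_trans _ _ (1 / 6)); first lra.
by apply: limr_ge qpoch_cvgn _; apply: nearW; exact: qpoch_ge.
Qed.

Lemma Kq_lt_qpoch (m : nat) : Kq R q < qpoch m.
Proof.
rewrite Kq_limn_qpoch.
apply: le_lt_trans (nonincreasing_cvgn_ge qpoch_nonincreasing qpoch_cvgn m.+1) _.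
rewrite qpochS -[X in _ < X]mulr1 ltr_pM2l ?qpoch_gt0 //.
by rewrite ltrBlDr ltrDl invr_gt0 qpow_gt0.
Qed.

Lemma qfact_split (m k : nat) : (k <= m)%N ->
  \prod_(i < k) (Q ^+ (m - i) - 1) * qfact (m - k) = qfact m.
Proof.
elim: k => [|k IH] lekm; first by rewrite big_ord0 mul1r subn0.
have e : (m - k = (m - k.+1).+1)%N by lia.
rewrite big_ord_recr /= -mulrA [X in _ * X]mulrC {1}e -qfactS -e.
exact: IH (ltnW lekm).
Qed.

Lemma gauss_binom_qfact (m k : nat) : (k <= m)%N ->
  gauss_binom R q m k = qfact m / (qfact k * qfact (m - k)).
Proof.
move=> lekm.
have qpowB i j : (i <= j)%N -> Q ^+ j - Q ^+ i = Q ^+ i * (Q ^+ (j - i) - 1).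
  by move=> leij; rewrite mulrBr mulr1 -exprD subnKC.
rewrite /gauss_binom prodf_div.
under eq_bigr => i _ do rewrite (qpowB i m (leq_trans (ltnW (ltn_ord i)) lekm)).
under [X in _ / X]eq_bigr => i _ do rewrite (qpowB i k (ltnW (ltn_ord i))).
have qfact_k : \prod_(i < k) (Q ^+ (k - i) - 1) = qfact k.
  by rewrite -[RHS](qfact_split (leqnn k)) subnn qfact0 mulr1.
rewrite !big_split /= qfact_k -(qfact_split lekm).
have : 0 < \prod_(i < k) Q ^+ i by apply: prodr_gt0 => i _; exact: qpow_gt0.
have := qfact_gt0 k; have := qfact_gt0 (m - k).
by move=> *; field; rewrite !gt_eqF.
Qed.

Lemma gauss_binom_small (m k : nat) : (m < k)%N -> gauss_binom R q m k = 0.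
Proof.
by move=> ltmk; rewrite /gauss_binom (bigD1 (Ordinal ltmk)) //= subrr !mul0r.
Qed.

Lemma gauss_binom0 (m : nat) : gauss_binom R q m 0 = 1.
Proof. by rewrite /gauss_binom big_ord0. Qed.

Lemma gauss_binomS (m k : nat) :
  gauss_binom R q m.+1 k.+1 =
    gauss_binom R q m k + Q ^+ k.+1 * gauss_binom R q m k.+1.
Proof.
case: (ltngtP k m) => [ltkm | ltmk | ->].
- rewrite !gauss_binom_qfact // ?subSS; try lia.
  have -> : (m - k = (m - k.+1).+1)%N by lia.
  rewrite !qfactS.
  have -> : Q ^+ m.+1 = Q ^+ k.+1 * Q ^+ (m - k.+1).+1.
    by rewrite -exprD; congr (_ ^+ _); lia.
  have := qfact_gt0 m; have := qfact_gt0 k; have := qfact_gt0 (m - k.+1).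
  have := qpowS_gt1 k; have := qpowS_gt1 (m - k.+1).
  move=> *; field.
  by apply/and4P; split; rewrite gt_eqF ?subr_gt0.
- by rewrite !gauss_binom_small // ?mulr0 ?addr0 // ltnW.
- rewrite (gauss_binom_small (ltnSn m)) mulr0 addr0 !gauss_binom_qfact // !subnn.
  by rewrite qfact0 !mulr1 !divff // gt_eqF ?qfact_gt0.
Qed.

Lemma gauss_binom_vandermonde (m n k : nat) :
  gauss_binom R q (m + n) k = \sum_(i < k.+1)
    gauss_binom R q m i * gauss_binom R q n (k - i) * Q ^+ ((k - i) * (m - i)).
Proof.
elim: m n k => [|m IH] n k.
  rewrite add0n big_ord_recl /= gauss_binom0 subn0 mul1r muln0 expr0 mulr1.
  by rewrite big1 ?addr0 // => i _; rewrite gauss_binom_small // !mul0r.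
case: k => [|k].
  by rewrite big_ord_recl big_ord0 /= !gauss_binom0 addr0 mul0n expr0 !mulr1.
rewrite addSn gauss_binomS (IH n k) (IH n k.+1) [RHS]big_ord_recl; symmetry.
under eq_bigr => i _ do rewrite lift0 !subSS gauss_binomS mulrDl mulrDl.
rewrite big_split /= addrCA; congr (_ + _).
rewrite [X in _ = _ * X]big_ord_recl /= mulrDr; congr (_ + _).
  rewrite !gauss_binom0 !subn0 !mul1r mulrCA -exprD; congr (_ * _ ^+ _); lia.
rewrite big_distrr /=; apply: eq_bigr => i _.
case: (ltnP m i.+1) => lemi.
  by rewrite gauss_binom_small // !(mulr0, mul0r).
have expE : (i.+1 + (k - i) * (m - i) = k.+1 + (k - i) * (m - i.+1))%N.
  by have := ltn_ord i; nia.
rewrite mulrCA -!mulrA -!exprD -expE exprD; ring.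
Qed.

Lemma gauss_binom_ge0 (m k : nat) : 0 <= gauss_binom R q m k.
Proof.
case: (ltnP m k) => [ltmk | lekm]; first by rewrite gauss_binom_small.
rewrite gauss_binom_qfact // divr_ge0 ?mulr_ge0 // ltW ?qfact_gt0 //.
Qed.

Lemma gauss_binom_ge (m k : nat) : (k <= m)%N ->
  Q ^+ (k * (m - k)) <= gauss_binom R q m k.
Proof.
move=> lekm; rewrite mulnC exprM -[k in _ ^+ k]card_ord -prodr_const.
apply: ler_prod => i _; rewrite ltW ?qpow_gt0 //=.
have ltik := ltn_ord i.
have den_gt0 : 0 < Q ^+ k - Q ^+ i by rewrite subr_gt0 ltr_eXn2l ?qnat_gt1.
rewrite ler_pdivlMr // mulrBr -!exprD subnK // lerD2l lerN2.
by rewrite ler_eXn2l ?qnat_gt1 //; lia.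
Qed.

Lemma gauss_binom_ge1 (m k : nat) : (k <= m)%N -> 1 <= gauss_binom R q m k.
Proof.
move=> lekm; rewrite (le_trans _ (gauss_binom_ge lekm)) //.
by rewrite exprn_ege1 // ltW ?qnat_gt1.
Qed.

Lemma gauss_binom_le (m k : nat) : (k <= m)%N ->
  gauss_binom R q m k <= Q ^+ (k * (m - k)) / qpoch k.
Proof.
move=> lekm; rewrite gauss_binom_qfact // !qfact_qpoch.
rewrite -{1}(subnKC lekm) bin2S_addn 2!exprD.
have qpoch_m : qpoch m <= qpoch (m - k) by apply: qpoch_nonincreasing; lia.
have := qpoch_gt0 k; have := qpoch_gt0 (m - k); have := qpoch_gt0 m.
have := qpow_gt0 'C(k.+1, 2); have := qpow_gt0 'C((m - k).+1, 2).
have := qpow_gt0 (k * (m - k)).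
set a := Q ^+ 'C(k.+1, 2); set b := Q ^+ 'C((m - k).+1, 2).
set c := Q ^+ (k * (m - k)) => c_gt0 b_gt0 a_gt0 Pm_gt0 Pmk_gt0 Pk_gt0.
have -> : a * b * c * qpoch m / (a * qpoch k * (b * qpoch (m - k)))
   = c / qpoch k * (qpoch m / qpoch (m - k)) by field; rewrite !gt_eqF.
apply: ler_piMr; first by rewrite divr_ge0 // ltW.
by rewrite ler_pdivrMr // mul1r.
Qed.

Lemma gauss_binom_subset (r t d : nat) : (d <= t)%N -> (t <= r)%N ->
  gauss_binom R q r d * gauss_binom R q (r - d) (t - d) =
  gauss_binom R q r t * gauss_binom R q t (t - d).
Proof.
move=> ledt letr; rewrite !gauss_binom_qfact ?leq_subr ?leq_sub2r //; try lia.
have -> : (r - d - (t - d) = r - t)%N by lia.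
have -> : (t - (t - d) = d)%N by lia.
have := qfact_gt0 r; have := qfact_gt0 t; have := qfact_gt0 d.
have := qfact_gt0 (r - d); have := qfact_gt0 (t - d); have := qfact_gt0 (r - t).
by move=> *; field; rewrite !gt_eqF.
Qed.

Lemma N_C_ge0 (n r d : nat) : 0 <= N_C R q n r d.
Proof. by rewrite !mulr_ge0 ?gauss_binom_ge0 // ltW ?qpow_gt0. Qed.

Lemma N_C_ge (n r t : nat) : (t <= r)%N -> (t <= n - r)%N ->
  Q ^+ (t * (n - t)) <= N_C R q n r t.
Proof.
move=> letr letnr.
have -> : (t * (n - t) = t * t + t * (r - t) + t * (n - r - t))%N by nia.
rewrite /N_C 2!exprD; apply: ler_pM; last exact: gauss_binom_ge.
- by rewrite mulr_ge0 // ltW ?qpow_gt0.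
- by rewrite ltW ?qpow_gt0.
- by rewrite ler_pM2l ?qpow_gt0 ?gauss_binom_ge.
Qed.

Lemma N_C_le_V_C (n r t : nat) : N_C R q n r t <= V_C R q n r t.
Proof.
rewrite /V_C big_mkord (bigD1 ord_max) //= lerDl.
by apply: sumr_ge0 => d _; exact: N_C_ge0.
Qed.

Lemma V_C_le (n r t : nat) : (t <= r)%N ->
  V_C R q n r t <= gauss_binom R q r t * gauss_binom R q (t + (n - r)) t.
Proof.
move=> letr.
have -> : gauss_binom R q (t + (n - r)) t =
    \sum_(d < t.+1)
      Q ^+ (d * d) * gauss_binom R q t (t - d) * gauss_binom R q (n - r) d.
  rewrite gauss_binom_vandermonde (reindex_inj rev_ord_inj) /=.
  apply: eq_bigr => i _; have := ltn_ord i; rewrite subSS => leit.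
  by rewrite subKn // mulrC mulrA.
rewrite /V_C big_mkord big_distrr /=; apply: ler_sum => d _.
have ledt : (d <= t)%N by rewrite -ltnS.
have binom_d :
    gauss_binom R q r d <= gauss_binom R q r t * gauss_binom R q t (t - d).
  rewrite -gauss_binom_subset // ler_peMr ?gauss_binom_ge0 //.
  by rewrite gauss_binom_ge1 // leq_sub2r.
rewrite /N_C; set g := gauss_binom R q (n - r) d.
have -> : gauss_binom R q r t * (Q ^+ (d * d) * gauss_binom R q t (t - d) * g) =
    Q ^+ (d * d) * (gauss_binom R q r t * gauss_binom R q t (t - d)) * g by ring.
apply: ler_wpM2r; first exact: gauss_binom_ge0.
by apply: ler_wpM2l; first exact: ltW (qpow_gt0 _).
Qed.

Lemma V_C_lt (n r t : nat) : (t <= r)%N -> (r <= n)%N ->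
  V_C R q n r t < (Kq R q) ^-2 * Q ^+ (t * (n - t)).
Proof.
move=> letr lern; apply: le_lt_trans (V_C_le n letr) _.
have := gauss_binom_le letr; have := gauss_binom_le (leq_addr (n - r) t).
rewrite addKn => le_ts le_rt.
apply: le_lt_trans
  (ler_pM (gauss_binom_ge0 _ _) (gauss_binom_ge0 _ _) le_rt le_ts) _.
have -> : (t * (n - t) = t * (r - t) + t * (n - r))%N by nia.
rewrite exprD; have := qpow_gt0 (t * (r - t)); have := qpow_gt0 (t * (n - r)).
set a := Q ^+ (t * (r - t)); set b := Q ^+ (t * (n - r)) => b_gt0 a_gt0.
have P_gt0 := qpoch_gt0 t; have K_gt0 := Kq_gt0; have K_lt_P := Kq_lt_qpoch t.
have -> : a / qpoch t * (b / qpoch t) = (a * b) / qpoch t ^+ 2.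
  by field; rewrite gt_eqF.
rewrite [X in _ < X]mulrC ltr_pM2l ?mulr_gt0 // ltf_pV2 ?posrE ?exprn_gt0 //.
by rewrite !expr2 ltr_pM // ltW.
Qed.

End QBinomial.

Theorem lemma3 (R : realType) (q n r t : nat) :
  prime_power q -> (r <= n./2)%N -> (t <= r)%N ->
  (q%:R : R) ^+ (t * (n - t)) <= V_C R q n r t /\
  V_C R q n r t < (Kq R q) ^-2 * (q%:R : R) ^+ (t * (n - t)).
Proof.
move=> [p [k [p_prime [k_gt0 ->]]]] le_r_half letr.
have q_gt1 : (1 < p ^ k)%N by rewrite -(exp1n k) ltn_exp2r // prime_gt1.
have le_2r : (r + r <= n)%N by rewrite addnn -geq_half_double.
split; last by apply: V_C_lt; lia.
apply: le_trans (N_C_le_V_C R q_gt1 n r t).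
by apply: N_C_ge => //; lia.
Qed.
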